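(* Let $\mathcal{G}=(\mathcal{V},\mathcal{E})$ be a directed graph with terminals $s,t$ and $f:2^{\mathcal{E}}\to\mathbb{R}_+$ normalized, monotone nondecreasing and submodular. Let $\widehat C$ be an $(s,t)$-cut minimizing $\hat f_{\mathrm{pf}}$, and let $C^*$ be a minimal $(s,t)$-cut minimizing $f$. Let $\Delta_s=\{v: \exists (v,u)\in C^*\}$ and $\Delta_t=\{v:\exists (u,v)\in C^*\}$. Then $$f(\widehat C)\le \min\{|\Delta_s|,|\Delta_t|\}\,f(C^* )\le \frac{|\mathcal{V}|}{2}f(C^* ).$$
   Context: An $(s,t)$-cut is a set of edges whose removal disconnects all $s$-$t$ paths; it is minimal if no proper subset is an $(s,t)$-cut. For $C\subseteq\mathcal{E}$, let $\mathcal{P}_C$ be the family of all partitions $\{C^\Pi_v\}_{v\in\mathcal{V}}$ of $C$ obtained by assigning each edge $(u,w)\in C$ either to its tail $u$ or to its head $w$ ($C^\Pi_v$ = edges assigned to $v$, possibly empty), and $\hat f_{\mathrm{pf}}(C)=\min_{\Pi(C)\in\mathcal{P}_C}\sum_{v\in\mathcal{V}}f(C^\Pi_v)$. *)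

From HB Require Import structures.
From mathcomp Require Import all_boot all_order all_algebra.
Set Implicit Arguments. Unset Strict Implicit. Unset Printing Implicit Defensive.
Import Order.TTheory GRing.Theory Num.Theory.
Local Open Scope ring_scope.

Section Graph.
Variables (V Ed : finType) (tail head : Ed -> V).

Definition adj_without (C : {set Ed}) : rel V :=
  fun u w => [exists e, (e \notin C) && (tail e == u) && (head e == w)].

Definition is_cut (s t : V) (C : {set Ed}) : bool :=
  ~~ connect (adj_without C) s t.

Definition is_minimal_cut (s t : V) (C : {set Ed}) : Prop :=
  is_cut s t C /\ forall D : {set Ed}, D \proper C -> ~~ is_cut s t D.

(* block of the partition of C induced by the assignment g
   (g e = true: edge e assigned to its tail; false: to its head) *)
Definition pblock_of (C : {set Ed}) (g : {ffun Ed -> bool}) (v : V) : {set Ed} :=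
  [set e in C | if g e then tail e == v else head e == v].

Variable R : realFieldType.
Variable f : {set Ed} -> R.

Definition pf_cost (C : {set Ed}) (g : {ffun Ed -> bool}) : R :=
  \sum_(v : V) f (pblock_of C g v).

Definition f_pf (C : {set Ed}) : R :=
  \big[Num.min/pf_cost C [ffun=> true]]_(g : {ffun Ed -> bool}) pf_cost C g.

Definition Delta_s (C : {set Ed}) : {set V} := [set v | [exists e in C, tail e == v]].
Definition Delta_t (C : {set Ed}) : {set V} := [set v | [exists e in C, head e == v]].

End Graph.

Definition normalized (T : finType) (R : realFieldType) (f : {set T} -> R) :=
  f set0 = 0.
Definition nonneg_fun (T : finType) (R : realFieldType) (f : {set T} -> R) :=
  forall A, 0 <= f A.
Definition monotone_set_fun (T : finType) (R : realFieldType) (f : {set T} -> R) :=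
  forall A B : {set T}, A \subset B -> f A <= f B.
Definition submodular (T : finType) (R : realFieldType) (f : {set T} -> R) :=
  forall A B : {set T}, f (A :|: B) + f (A :&: B) <= f A + f B.

From HB Require Import structures.
From mathcomp Require Import all_boot all_order all_algebra.
From mathcomp Require Import lra.
Set Implicit Arguments. Unset Strict Implicit. Unset Printing Implicit Defensive.
Import Order.TTheory GRing.Theory Num.Theory.
Local Open Scope ring_scope.

(* Every partition of C into vertex blocks covers C, so monotonicity and
   subadditivity give f C <= f_pf C; comparing f_pf C* with the two constant
   assignments (all edges to their tails, all to their heads) gives
   f_pf C* <= min(|Delta_s|, |Delta_t|) f C*.  For a minimal cut every edge
   leaves the source side and enters the sink side, so Delta_s and Delta_t are
   disjoint and the smaller one has at most |V|/2 vertices. *)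

Lemma connect_forward_closed (T : finType) (e : rel T) (P : pred T) x y :
  P x -> (forall u w, P u -> e u w -> P w) -> connect e x y -> P y.
Proof.
move=> Px closedP /connectP [p pth ->].
elim: p x Px pth => [|z p IHp] x Px //= /andP [exz pz].
exact: IHp (closedP _ _ Px exz) pz.
Qed.

Lemma submodular_bigcup_le (T I : finType) (R : realFieldType)
    (f : {set T} -> R) (A : I -> {set T}) :
  nonneg_fun f -> normalized f -> submodular f ->
  f (\bigcup_(i : I) A i) <= \sum_(i : I) f (A i).
Proof.
move=> f_ge0 f0 f_sub.
apply: (big_ind2 (fun X r => f X <= r)) => [|X x Y y fX fY|//]; first by rewrite f0.
by have := f_sub X Y; have := f_ge0 (X :&: Y); lra.
Qed.

Section MinimalCut.

Variables (V Ed : finType) (tail head : Ed -> V) (s t : V).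

Lemma adj_without_setD1 (C : {set Ed}) e u w :
  adj_without tail head (C :\ e) u w ->
  adj_without tail head C u w \/ u = tail e /\ w = head e.
Proof.
case/existsP => e' /andP [/andP [e'C /eqP <-] /eqP <-].
case: (eqVneq e' e) => [-> | e'e]; first by right.
left; apply/existsP; exists e'.
by move: e'C; rewrite !inE e'e /= => ->; rewrite !eqxx.
Qed.

(* Removing e from a minimal cut C reopens an s-t path, and the only new step
   available is along e; so e must start on the source side of C and end
   outside it. *)
Lemma minimal_cut_edge_crossing (C : {set Ed}) e :
  is_minimal_cut tail head s t C -> e \in C ->
  connect (adj_without tail head C) s (tail e) &&
  ~~ connect (adj_without tail head C) s (head e).
Proof.
case=> C_cut C_min eC; set S := connect (adj_without tail head C) s.
have s_t : connect (adj_without tail head (C :\ e)) s t.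
  by apply/negPn/C_min/properD1.
have S_step u w : S u -> adj_without tail head (C :\ e) u w ->
    S w \/ u = tail e /\ w = head e.
  move=> Su /adj_without_setD1 [uw|]; last by right.
  by left; apply: connect_trans Su (connect1 uw).
have S_s : S s := connect0 _ s.
apply/andP; split.
  apply/negPn/negP => tail_out; apply: (negP C_cut); rewrite -/(S t).
  apply: (connect_forward_closed S_s _ s_t) => u w Su /(S_step _ _ Su) [//|[ue _]].
  by move: Su; rewrite ue (negbTE tail_out).
apply/negP => head_in; apply: (negP C_cut); rewrite -/(S t).
by apply: (connect_forward_closed S_s _ s_t) => u w Su /(S_step _ _ Su) [//|[_ ->]].
Qed.

Lemma minimal_cut_Delta_disjoint (C : {set Ed}) :
  is_minimal_cut tail head s t C ->
  [disjoint Delta_s tail C & Delta_t head C].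
Proof.
move=> C_minimal; apply/pred0P => v /=; apply/negbTE/andP.
rewrite !inE => -[/existsP [e1 /andP [e1C /eqP <-]] /existsP [e2 /andP [e2C /eqP h2]]].
have /andP [_ head_out] := minimal_cut_edge_crossing C_minimal e2C.
have /andP [tail_in _] := minimal_cut_edge_crossing C_minimal e1C.
by move: head_out; rewrite h2 tail_in.
Qed.

Lemma minimal_cut_minn_Delta_le (C : {set Ed}) :
  is_minimal_cut tail head s t C ->
  (2 * minn #|Delta_s tail C| #|Delta_t head C| <= #|V|)%N.
Proof.
move=> /minimal_cut_Delta_disjoint /disjoint_setI0 disj.
have : (#|Delta_s tail C| + #|Delta_t head C| <= #|V|)%N.
  by rewrite -cardsUI disj cards0 addn0 max_card.
by apply: leq_trans; rewrite mul2n -addnn leq_add ?geq_minl ?geq_minr.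
Qed.

End MinimalCut.

Section PartitionCost.

Variables (V Ed : finType) (tail head : Ed -> V).
Variables (R : realFieldType) (f : {set Ed} -> R).
Hypotheses (f_ge0 : nonneg_fun f) (f0 : normalized f).
Hypotheses (f_mono : monotone_set_fun f) (f_sub : submodular f).

Lemma f_pf_le_pf_cost C g : f_pf tail head f C <= pf_cost tail head f C g.
Proof. by rewrite /f_pf (bigD1 g) //= ge_min lexx. Qed.

Lemma le_f_pf C : f C <= f_pf tail head f C.
Proof.
have f_le_cost g : f C <= pf_cost tail head f C g.
  apply: le_trans (submodular_bigcup_le _ f_ge0 f0 f_sub); apply: f_mono.
  apply/subsetP => e eC; apply/bigcupP; exists (if g e then tail e else head e) => //.
  by rewrite /pblock_of inE eC /=; case: (g e).
by apply: (big_ind (fun x => f C <= x)) => // x y fx fy; rewrite le_min fx fy.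
Qed.

Lemma pf_cost_const_le C (b : bool) (D : {set V}) :
  (forall v, v \notin D -> pblock_of tail head C [ffun=> b] v = set0) ->
  pf_cost tail head f C [ffun=> b] <= #|D|%:R * f C.
Proof.
move=> block0.
apply: (@le_trans _ _ (\sum_(v : V) if v \in D then f C else 0)).
  apply: ler_sum => v _; case: ifPn => [_ | vD]; last by rewrite block0 // f0.
  by apply: f_mono; apply/subsetP => e; rewrite inE => /andP [].
by rewrite -big_mkcond /= sumr_const mulr_natl.
Qed.

Lemma f_pf_le_Delta_s C : f_pf tail head f C <= #|Delta_s tail C|%:R * f C.
Proof.
apply: le_trans (f_pf_le_pf_cost C [ffun=> true]) _; apply: pf_cost_const_le.
move=> v; apply: contraNeq => /set0Pn [e]; rewrite !inE ffunE => /andP [eC tv].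
by apply/existsP; exists e; rewrite eC.
Qed.

Lemma f_pf_le_Delta_t C : f_pf tail head f C <= #|Delta_t head C|%:R * f C.
Proof.
apply: le_trans (f_pf_le_pf_cost C [ffun=> false]) _; apply: pf_cost_const_le.
move=> v; apply: contraNeq => /set0Pn [e]; rewrite !inE ffunE => /andP [eC hv].
by apply/existsP; exists e; rewrite eC.
Qed.

Lemma f_pf_le_minn_Delta C :
  f_pf tail head f C <= (minn #|Delta_s tail C| #|Delta_t head C|)%:R * f C.
Proof.
by case: leqP => _; rewrite ?f_pf_le_Delta_s ?f_pf_le_Delta_t.
Qed.

End PartitionCost.

Theorem theorem3 (V Ed : finType) (tail head : Ed -> V) (s t : V)
  (R : realFieldType) (f : {set Ed} -> R)
  (f_nonneg : nonneg_fun f) (f_norm : normalized f)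
  (f_mono : monotone_set_fun f) (f_sub : submodular f)
  (Chat Cstar : {set Ed})
  (Chat_cut : is_cut tail head s t Chat)
  (Chat_min : forall C, is_cut tail head s t C ->
                f_pf tail head f Chat <= f_pf tail head f C)
  (Cstar_minimal : is_minimal_cut tail head s t Cstar)
  (Cstar_min : forall C, is_cut tail head s t C -> f Cstar <= f C) :
  f Chat <= (minn #|Delta_s tail Cstar| #|Delta_t head Cstar|)%:R * f Cstar /\
  (minn #|Delta_s tail Cstar| #|Delta_t head Cstar|)%:R * f Cstar
    <= (#|V|%:R / 2) * f Cstar.
Proof.
split.
  apply: le_trans (le_f_pf _ _ f_nonneg f_norm f_mono f_sub Chat) _.
  apply: le_trans (Chat_min _ Cstar_minimal.1) _.
  exact: f_pf_le_minn_Delta.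
have := minimal_cut_minn_Delta_le Cstar_minimal.
rewrite -(ler_nat R) natrM; move: (minn _ _)%:R (#|V|%:R : R) => m n mn.
rewrite -subr_ge0 -mulrBl; apply: mulr_ge0 _ (f_nonneg Cstar); lra.
Qed.
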